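(* Let $(a,b,c,\lambda,\delta)\in(\mathbb F^\times)^4\times\mathbb F$. If the $\triangle_q$-module $W_\lambda^\delta(a,b,c)$ is irreducible, then $\delta\ne0$ or $\lambda^2\notin\{q^{2i}: i=0,1,\dots,d'-2\}$.
   Context: $\mathbb F$ is an algebraically closed field and $q\in\mathbb F^\times$ a root of unity of order $d\notin\{1,2,4\}$; $d'=d$ if $d$ odd, $d'=d/2$ if $d$ even. $\triangle_q$ is the unital associative $\mathbb F$-algebra with generators $A,B,C$ subject to: each of $A+\frac{qBC-q^{-1}CB}{q^2-q^{-2}}$, $B+\frac{qCA-q^{-1}AC}{q^2-q^{-2}}$, $C+\frac{qAB-q^{-1}BA}{q^2-q^{-2}}$ is central; $\alpha,\beta,\gamma$ are these times $q+q^{-1}$. For $(a,b,c,\lambda)\in(\mathbb F^\times)^4$, $i\in\mathbb N$: $\theta_i=a\lambda^{-1}q^{2i}+a^{-1}\lambda q^{-2i}$, $\theta_i^*=b\lambda^{-1}q^{2i}+b^{-1}\lambda q^{-2i}$, $\varphi_i=a^{-1}b^{-1}\lambda q(q^i-q^{-i})(\lambda^{-1}q^{i-1}-\lambda q^{1-i})(q^{-i}-abc\lambda^{-1}q^{i-1})(q^{-i}-abc^{-1}\lambda^{-1}q^{i-1})$. $M_\lambda(a,b,c)$ has basis $\{m_i\}_{i\in\mathbb N}$, $(A-\theta_i)m_i=m_{i+1}$, $(B-\theta_i^* )m_i=\varphi_im_{i-1}$, $\alpha,\beta,\gamma$ acting as $(b+b^{-1})(c+c^{-1})+(a+a^{-1})(\lambda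 q+\lambda^{-1}q^{-1})$, $(c+c^{-1})(a+a^{-1})+(b+b^{-1})(\lambda q+\lambda^{-1}q^{-1})$, $(a+a^{-1})(b+b^{-1})+(c+c^{-1})(\lambda q+\lambda^{-1}q^{-1})$. $W_\lambda^\delta(a,b,c)$ is the quotient of $M_\lambda(a,b,c)$ by the span of $\{\delta m_i-m_{d'+i}\}_{i\in\mathbb N}$. *)

From HB Require Import structures.
From mathcomp Require Import all_boot all_order all_algebra.
Set Implicit Arguments. Unset Strict Implicit. Unset Printing Implicit Defensive.
Import Order.TTheory GRing.Theory.
Local Open Scope ring_scope.

(* The module M_lambda(a,b,c) is modelled on the F-vector space {poly F},
   the basis vector m_i being 'X^i. *)

Section Delta.
Variables (F : fieldType) (q a b c lam : F).

Definition dprime (d : nat) : nat := if odd d then d else d./2.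

Definition theta (i : nat) : F := a / lam * q ^+ (2 * i) + lam / a * q ^- (2 * i).
Definition thetas (i : nat) : F := b / lam * q ^+ (2 * i) + lam / b * q ^- (2 * i).
(* q^{i-1} written as q^i * q^{-1}, q^{1-i} as q * q^{-i} *)
Definition phi (i : nat) : F :=
  (a * b)^-1 * lam * q * (q ^+ i - q ^- i)
  * (lam^-1 * (q ^+ i * q^-1) - lam * (q * q ^- i))
  * (q ^- i - a * b * c / lam * (q ^+ i * q^-1))
  * (q ^- i - a * b / c / lam * (q ^+ i * q^-1)).

(* scalar by which gamma acts *)
Definition gammaM : F :=
  (a + a^-1) * (b + b^-1) + (c + c^-1) * (lam * q + lam^-1 * q^-1).

Definition actA (p : {poly F}) : {poly F} :=
  \sum_(i < size p) p`_i *: (theta i *: 'X^i + 'X^(i.+1)).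
(* action of B : (B - theta*_i) m_i = phi_i m_{i-1}  (phi_0 = 0) *)
Definition actB (p : {poly F}) : {poly F} :=
  \sum_(i < size p) p`_i *: (thetas i *: 'X^i + phi i *: 'X^(i.-1)).
(* action of C, forced by: C + (qAB - q^{-1}BA)/(q^2-q^{-2}) is central and
   acts as gamma/(q+q^{-1}) *)
Definition actC (p : {poly F}) : {poly F} :=
  (gammaM / (q + q^-1)) *: p
  - (q ^+ 2 - q ^- 2)^-1 *: (q *: actA (actB p) - q^-1 *: actB (actA p)).

Definition inN (dp : nat) (delta : F) (p : {poly F}) : Prop :=
  exists s : seq (nat * F),
    p = \sum_(x <- s) x.2 *: (delta *: 'X^(x.1) - 'X^(dp + x.1)).

Definition subspace (U : {poly F} -> Prop) : Prop :=
  [/\ U 0, (forall p r, U p -> U r -> U (p + r)) & (forall k p, U p -> U (k *: p))].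

Definition stable (U : {poly F} -> Prop) : Prop :=
  [/\ (forall p, U p -> U (actA p)), (forall p, U p -> U (actB p))
    & (forall p, U p -> U (actC p))].

(* W = M / N is irreducible: W <> 0, and every submodule of M containing N
   is N or M (correspondence theorem for quotient modules). *)
Definition W_irreducible (dp : nat) (delta : F) : Prop :=
  (exists p, ~ inN dp delta p) /\
  forall U : {poly F} -> Prop,
    subspace U -> (forall p, inN dp delta p -> U p) -> stable U ->
    (forall p, U p -> inN dp delta p) \/ (forall p, U p).

End Delta.

(** If [delta = 0] and [lam^2 = q^(2i)] with [i + 1 < d'], then [phi (i+1)] vanishes,
    so [B] cannot lower [m_(i+1)] to [m_i] and [span {m_j | j > i}] is a submodule of
    [M_lambda(a,b,c)].  For [delta = 0] the subspace [N] is [span {m_j | j >= d'}], so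
    this submodule contains [N] properly (it contains [m_(i+1)]) and misses [m_0];
    it therefore projects to a proper nonzero submodule of [W]. *)

From HB Require Import structures.
From mathcomp Require Import all_boot all_order all_algebra.
From mathcomp Require Import ring zify.
Set Implicit Arguments.
Unset Strict Implicit.
Unset Printing Implicit Defensive.

Import GRing.Theory.
Local Open Scope ring_scope.

Lemma dprime_gt1 d : (2 < d)%N -> (1 < dprime d)%N.
Proof.
rewrite /dprime; case: ifP => [_|even_d d_gt2]; first exact: ltnW.
have := odd_double_half d; rewrite even_d add0n => d_eq.
by move: d_gt2; rewrite -d_eq -!muln2; lia.
Qed.

Section TailSpan.
Variables (F : fieldType) (q a b c lam : F).

Definition tail_span (n : nat) (p : {poly F}) : Prop :=
  forall j, (j < n)%N -> p`_j = 0.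

Lemma tail_span_subspace n : subspace (tail_span n).
Proof.
split=> [j _|p r p_n r_n j jn|k p p_n j jn]; first by rewrite coef0.
- by rewrite coefD p_n ?r_n ?addr0.
- by rewrite coefZ p_n ?mulr0.
Qed.

Lemma tail_span_Xn n : tail_span n 'X^n.
Proof. by move=> j jn; rewrite coefXn ltn_eqF. Qed.

Lemma actA_tail_span n p : tail_span n p -> tail_span n (actA q a lam p).
Proof.
move=> p_n j jn; rewrite /actA coef_sum big1 // => k _.
rewrite coefZ coefD coefZ !coefXn.
have [kn|nk] := ltnP k n; first by rewrite p_n // mul0r.
by rewrite !ltn_eqF ?(mulr0, add0r) //; lia.
Qed.

Lemma actB_tail_span n p :
  phi q a b c lam n = 0 -> tail_span n p -> tail_span n (actB q a b c lam p).
Proof.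
move=> phi_n p_n j jn; rewrite /actB coef_sum big1 // => k _.
rewrite coefZ coefD !coefZ !coefXn.
have [kn|nk] := ltnP k n; first by rewrite p_n // mul0r.
rewrite ltn_eqF; last by lia.
have [j_eq|_] := eqVneq j k.-1; last by rewrite !(mulr0, addr0).
have -> : k = n :> nat by lia.
by rewrite phi_n !(mulr0, mul0r, addr0).
Qed.

Lemma actC_tail_span n p :
  phi q a b c lam n = 0 -> tail_span n p -> tail_span n (actC q a b c lam p).
Proof.
move=> phi_n p_n j jn; rewrite /actC coefB !coefZ coefB !coefZ.
rewrite p_n // (actA_tail_span (actB_tail_span phi_n p_n) jn).
by rewrite (actB_tail_span phi_n (actA_tail_span p_n) jn) !(mulr0, subrr).
Qed.

Lemma stable_tail_span n :
  phi q a b c lam n = 0 -> stable q a b c lam (tail_span n).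
Proof.
move=> phi_n; split=> p.
- exact: actA_tail_span.
- exact: actB_tail_span.
- exact: actC_tail_span.
Qed.

Lemma inN0_tail_span dp p : inN dp 0 p -> tail_span dp p.
Proof.
move=> [s ->] j jdp; rewrite coef_sum big1 // => x _.
by rewrite coefZ coefB coefZ mul0r coefXn ltn_eqF ?subrr ?mulr0 //; lia.
Qed.

Lemma not_W_irreducible_tail_span dp n :
  (0 < n < dp)%N -> phi q a b c lam n = 0 -> ~ W_irreducible q a b c lam dp 0.
Proof.
move=> /andP[n_gt0 n_lt_dp] phi_n [_ /(_ (tail_span n))].
case=> [|||tail_N|tail_all].
- exact: tail_span_subspace.
- by move=> p /inN0_tail_span p_dp j jn; apply: p_dp; lia.
- exact: stable_tail_span.
- have /eqP := inN0_tail_span (tail_N _ (tail_span_Xn (n := n))) n_lt_dp.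
  by rewrite coefXn eqxx oner_eq0.
- have /eqP := tail_all 1 0%N n_gt0.
  by rewrite coef1 oner_eq0.
Qed.

Lemma phiS_eq0 i : q != 0 -> lam != 0 -> lam ^+ 2 = q ^+ (2 * i) ->
  phi q a b c lam i.+1 = 0.
Proof.
move=> q0 lam0 lam2; rewrite /phi; set x := q ^+ i.
have x0 : x != 0 by rewrite expf_neq0.
have x2 : x ^+ 2 = lam ^+ 2 by rewrite lam2 -exprM mulnC.
have -> : q ^+ i.+1 * q^-1 = x by rewrite exprSr mulfK.
have -> : q * q ^- i.+1 = x^-1 by rewrite exprSr invfM mulrCA mulfV ?mulr1.
have -> : lam^-1 * x - lam * x^-1 = (x ^+ 2 - lam ^+ 2) / (lam * x).
  by field; rewrite lam0 x0.
by rewrite x2 subrr !(mul0r, mulr0).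
Qed.

End TailSpan.

Theorem lemma8p1 (F : closedFieldType) (q : F) (d : nat)
  (hq : d.-primitive_root q) (hd : d \notin [:: 1%N; 2%N; 4%N])
  (a b c lam delta : F)
  (ha : a != 0) (hb : b != 0) (hc : c != 0) (hlam : lam != 0) :
  W_irreducible q a b c lam (dprime d) delta ->
  delta != 0 \/ ~ (exists i : nat, (i <= dprime d - 2)%N /\ lam ^+ 2 = q ^+ (2 * i)).
Proof.
have [->|] := eqVneq delta 0; last by left.
move=> W_irr; right=> -[i [i_le lam2]].
have d_gt2 : (2 < d)%N.
  by move: (prim_order_gt0 hq) hd; rewrite !inE; lia.
have q0 : q != 0 by rewrite (prim_root_eq0 hq) -lt0n (prim_order_gt0 hq).
have i_lt : (0 < i.+1 < dprime d)%N by have := dprime_gt1 d_gt2; lia.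
exact: (not_W_irreducible_tail_span i_lt (phiS_eq0 a b c q0 hlam lam2) W_irr).
Qed.
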